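(* Consider the following model. A principal P and an agent A interact over two periods $t\in\{1,2\}$. States $\omega_t\in\{0,1\}$ satisfy $\Pr[\omega_1=1]=\mu_0\in(0,1)$ and $\Pr[\omega_2=\omega\mid\omega_1=\omega]=\rho\in(1/2,1)$. In each period A chooses $e_t\in\{0,1\}$; if $e_t=1$ he observes $\omega_t$, if $e_t=0$ he observes $\omega_t$ with probability $\pi\in(0,1)$ and nothing otherwise. A reports $r_t\in\{\varnothing,\omega_t\}$ if he observed $\omega_t$, else $r_t=\varnothing$. P chooses $x=\hat x(r_1,r_2)\in\{0,1\}$ at the end of period 2. Payoffs: P gets $\mathbb{1}[x=\omega_2]-k(e_1+e_2)$, A gets $x-c(e_1+e_2)$, $c,k>0$. P commits to a mechanism ($\sigma_1\in\{0,1\}$, $\sigma_2:\{\varnothing,0,1\}\to\{0,1\}$, $\hat x$) and A best-responds, following the recommendation and disclosing when indifferent. Let $\kappa=k/(1-\pi)$ and $\gamma=c/(1-\pi)$. If $\kappa,\gamma\in(0,1-\rho]$, then the optimal mechanism coincides with the baseline mechanism: $\sigma_1=0$, $\sigma_2(r_1)=1$ for all $r_1$, with the efficient assignment $\hat x(r_1,r_2)=\mathbb{1}[r_2=1]$ (assigning $0$ if the requested period-2 result is not reported).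
   Context: The baseline mechanism is the one P would choose if she controlled testing directly and observed all revealed results; for $\kappa\le1-\rho$ it never tests in period 1, always tests in period 2, and sets $x=\omega_2$. *)

From Stdlib Require Import Reals Lra.
Open Scope R_scope.

(* Reports: None = empty report (varnothing), Some w = reported state w. *)
Definition report := option bool.

Record mechanism := Mech {
  sig1 : bool;
  sig2 : report -> bool;
  xhat : report -> report -> bool
}.

Definition b2R (b : bool) : R := if b then 1 else 0.

Section Model.
Variables (mu0 rho pi c k : R).

Definition obsprob (e : bool) : R := if e then 1 else pi.
Definition p1 (w : bool) : R := if w then mu0 else 1 - mu0.
Definition tr (w1 w2 : bool) : R := if Bool.eqb w1 w2 then rho else 1 - rho.
Definition qof (w : bool) : R := tr w true.
Definition mu1 : R := mu0 * rho + (1 - mu0) * (1 - rho).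

Definition d2 (m : mechanism) (r1 : report) (w : bool) : bool :=
  if Rle_dec (b2R (xhat m r1 None)) (b2R (xhat m r1 (Some w))) then true else false.
Definition r2obs (m : mechanism) (r1 : report) (w : bool) : report :=
  if d2 m r1 w then Some w else None.

Definition Vobs2 (m : mechanism) (r1 : report) (w : bool) : R :=
  b2R (xhat m r1 (r2obs m r1 w)).
Definition Vnon2 (m : mechanism) (r1 : report) : R := b2R (xhat m r1 None).

Definition EVobs2 (m : mechanism) (q : R) (r1 : report) : R :=
  q * Vobs2 m r1 true + (1 - q) * Vobs2 m r1 false.
Definition U2 (m : mechanism) (q : R) (r1 : report) (e : bool) : R :=
  obsprob e * EVobs2 m q r1 + (1 - obsprob e) * Vnon2 m r1 - c * b2R e.

Definition e2 (m : mechanism) (q : R) (r1 : report) : bool :=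
  let s := sig2 m r1 in
  if Rle_dec (U2 m q r1 (negb s)) (U2 m q r1 s) then s else negb s.
Definition W2 (m : mechanism) (q : R) (r1 : report) : R := U2 m q r1 (e2 m q r1).

Definition d1 (m : mechanism) (w : bool) : bool :=
  if Rle_dec (W2 m (qof w) None) (W2 m (qof w) (Some w)) then true else false.
Definition r1obs (m : mechanism) (w : bool) : report :=
  if d1 m w then Some w else None.
Definition V1obs (m : mechanism) (w : bool) : R := W2 m (qof w) (r1obs m w).
Definition EVobs1 (m : mechanism) : R :=
  mu0 * V1obs m true + (1 - mu0) * V1obs m false.
Definition U1 (m : mechanism) (e : bool) : R :=
  obsprob e * EVobs1 m + (1 - obsprob e) * W2 m mu1 None - c * b2R e.

Definition e1 (m : mechanism) : bool :=
  let s := sig1 m in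
  if Rle_dec (U1 m (negb s)) (U1 m s) then s else negb s.

Definition P2 (m : mechanism) (q : R) (r1 : report) (w2 : bool) : R :=
  let e := e2 m q r1 in
  obsprob e * b2R (Bool.eqb (xhat m r1 (r2obs m r1 w2)) w2)
  + (1 - obsprob e) * b2R (Bool.eqb (xhat m r1 None) w2)
  - k * b2R e.

Definition VP (m : mechanism) : R :=
  let e := e1 m in
  p1 true *
    (tr true true * (obsprob e * P2 m (qof true) (r1obs m true) true
                     + (1 - obsprob e) * P2 m mu1 None true)
   + tr true false * (obsprob e * P2 m (qof true) (r1obs m true) false
                     + (1 - obsprob e) * P2 m mu1 None false))
  + p1 false *
    (tr false true * (obsprob e * P2 m (qof false) (r1obs m false) true
                     + (1 - obsprob e) * P2 m mu1 None true)
   + tr false false * (obsprob e * P2 m (qof false) (r1obs m false) false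
                     + (1 - obsprob e) * P2 m mu1 None false))
  - k * b2R e.

End Model.

Definition baseline : mechanism :=
  Mech false (fun _ => true)
       (fun _ r2 => match r2 with Some true => true | _ => false end).

From Pilot Require Import Defs.
From Stdlib Require Import Reals Lra Psatz.
Open Scope R_scope.

(* Every belief P can hold about omega_2 lies in [1 - rho, rho], so without a
   test P's final decision is right with probability at most
   pi + (1 - pi) rho = 1 - (1 - pi)(1 - rho) <= 1 - k, and with a test at most
   1 at a cost k; hence no mechanism earns more than 1 - k.  The baseline
   earns exactly 1 - k: A always discloses, A's continuation value is q - c
   whatever he reported in period 1, so a period-1 test only costs him, and
   c <= (1 - pi)(1 - rho) <= (1 - pi) q makes the period-2 test worth its cost. *)

Lemma convex_comb_le (t x y z : R) :
  0 <= t <= 1 -> x <= z -> y <= z -> t * x + (1 - t) * y <= z.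
Proof. intros; nra. Qed.

Lemma scaled_cost_le (x pi rho : R) :
  pi < 1 -> x / (1 - pi) <= 1 - rho -> x <= (1 - pi) * (1 - rho).
Proof.
  intros Hpi Hx.
  replace x with (x / (1 - pi) * (1 - pi)) by (field; lra).
  apply (Rmult_le_compat_r (1 - pi)) in Hx; lra.
Qed.

Section Mechanisms.

Variables (mu0 rho pi c k : R).
Hypothesis Hmu0 : 0 < mu0 < 1.
Hypothesis Hrho : 1/2 < rho < 1.
Hypothesis Hpi : 0 < pi < 1.
Hypothesis Hc : 0 < c.
Hypothesis Hk : 0 < k.
Hypothesis Hk_small : k <= (1 - pi) * (1 - rho).
Hypothesis Hc_small : c <= (1 - pi) * (1 - rho).

Lemma mu1_between : 1 - rho <= mu1 mu0 rho <= rho.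
Proof. unfold mu1; split; nra. Qed.

(* The weight [a] is the true Pr[omega_2 = 1]; A's belief [q] enters only
   through his period-2 effort choice. *)
Definition EP2 (m : mechanism) (q : R) (r1 : report) (a : R) : R :=
  a * P2 pi c k m q r1 true + (1 - a) * P2 pi c k m q r1 false.

Lemma guess_le (a : R) (x : bool) :
  1 - rho <= a <= rho ->
  a * b2R (Bool.eqb x true) + (1 - a) * b2R (Bool.eqb x false) <= rho.
Proof. intros; destruct x; simpl; lra. Qed.

Lemma b2R_bounds (b : bool) : 0 <= b2R b <= 1.
Proof. destruct b; simpl; lra. Qed.

Lemma EP2_le (m : mechanism) (q : R) (r1 : report) (a : R) :
  1 - rho <= a <= rho -> EP2 m q r1 a <= 1 - k.
Proof.
  intros Ha. unfold EP2, P2.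
  set (hit1 := b2R (Bool.eqb (xhat m r1 (r2obs m r1 true)) true)).
  set (hit0 := b2R (Bool.eqb (xhat m r1 (r2obs m r1 false)) false)).
  set (guess1 := b2R (Bool.eqb (xhat m r1 None) true)).
  set (guess0 := b2R (Bool.eqb (xhat m r1 None) false)).
  assert (Hguess : a * guess1 + (1 - a) * guess0 <= rho) by (apply guess_le; exact Ha).
  assert (Hhit : a * hit1 + (1 - a) * hit0 <= 1)
    by (apply convex_comb_le; [lra | apply b2R_bounds ..]).
  destruct (e2 pi c m q r1); unfold obsprob; cbn [b2R].
  - lra.
  - assert (pi * (a * hit1 + (1 - a) * hit0) <= pi)
      by (rewrite <- (Rmult_1_r pi) at 2; apply Rmult_le_compat_l; lra).
    assert ((1 - pi) * (a * guess1 + (1 - a) * guess0) <= (1 - pi) * rho)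
      by (apply Rmult_le_compat_l; lra).
    lra.
Qed.

Lemma VP_decomp (m : mechanism) :
  let e := e1 mu0 rho pi c m in
  VP mu0 rho pi c k m =
    obsprob pi e * (mu0 * EP2 m rho (r1obs rho pi c m true) rho
                    + (1 - mu0) * EP2 m (1 - rho) (r1obs rho pi c m false) (1 - rho))
    + (1 - obsprob pi e) * EP2 m (mu1 mu0 rho) None (mu1 mu0 rho)
    - k * b2R e.
Proof. unfold VP, EP2, mu1, p1, qof, tr; simpl; ring. Qed.

Lemma VP_le (m : mechanism) : VP mu0 rho pi c k m <= 1 - k.
Proof.
  rewrite VP_decomp.
  set (e := e1 mu0 rho pi c m).
  pose proof mu1_between as Hmu1.
  assert (Hobs : 0 <= obsprob pi e <= 1) by (unfold obsprob; destruct e; lra).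
  assert (Hobs_branch :
    mu0 * EP2 m rho (r1obs rho pi c m true) rho
    + (1 - mu0) * EP2 m (1 - rho) (r1obs rho pi c m false) (1 - rho) <= 1 - k)
    by (apply convex_comb_le; [lra | apply EP2_le; lra ..]).
  pose proof (convex_comb_le _ _ _ _ Hobs Hobs_branch
                (EP2_le m (mu1 mu0 rho) None (mu1 mu0 rho) Hmu1)) as Hmix.
  pose proof (b2R_bounds e).
  nra.
Qed.

(* Qualified because Stdlib's Reals also defines [d2]. *)
Lemma baseline_discloses (r1 : report) (w : bool) : Defs.d2 baseline r1 w = true.
Proof. unfold Defs.d2, b2R; destruct w; simpl; destruct Rle_dec; auto; lra. Qed.

Lemma baseline_U2 (q : R) (r1 : report) (e : bool) :
  U2 pi c baseline q r1 e = obsprob pi e * q - c * b2R e.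
Proof.
  unfold U2, EVobs2, Vobs2, Vnon2, r2obs. rewrite !baseline_discloses.
  simpl; unfold b2R; ring.
Qed.

Lemma baseline_e2 (q : R) (r1 : report) :
  1 - rho <= q -> e2 pi c baseline q r1 = true.
Proof.
  intros Hq. unfold e2. rewrite !baseline_U2. simpl.
  destruct Rle_dec as [| Hnot]; auto.
  exfalso; apply Hnot; unfold b2R; nra.
Qed.

Lemma baseline_W2 (q : R) (r1 : report) :
  1 - rho <= q -> W2 pi c baseline q r1 = q - c.
Proof.
  intros Hq. unfold W2. rewrite baseline_e2, baseline_U2 by exact Hq.
  simpl; unfold b2R; ring.
Qed.

Lemma baseline_U1 (e : bool) :
  U1 mu0 rho pi c baseline e = mu1 mu0 rho - c - c * b2R e.
Proof.
  pose proof mu1_between.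
  unfold U1, EVobs1, V1obs, qof, tr; simpl.
  rewrite !baseline_W2 by lra.
  unfold mu1, obsprob, b2R; destruct e; ring.
Qed.

Lemma baseline_e1 : e1 mu0 rho pi c baseline = false.
Proof.
  unfold e1. rewrite !baseline_U1. simpl.
  destruct Rle_dec as [| Hnot]; auto.
  exfalso; apply Hnot; unfold b2R; lra.
Qed.

Lemma baseline_P2 (q : R) (r1 : report) (w : bool) :
  1 - rho <= q -> P2 pi c k baseline q r1 w = 1 - k.
Proof.
  intros Hq. unfold P2. rewrite baseline_e2 by exact Hq.
  unfold r2obs. rewrite baseline_discloses.
  destruct w; simpl; unfold b2R; ring.
Qed.

Lemma VP_baseline : VP mu0 rho pi c k baseline = 1 - k.
Proof.
  pose proof mu1_between.
  rewrite VP_decomp, baseline_e1. unfold EP2.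
  rewrite !baseline_P2 by lra.
  simpl; unfold b2R; ring.
Qed.

End Mechanisms.

Theorem propositionC2 (mu0 rho pi c k : R)
  (Hmu0 : 0 < mu0 < 1) (Hrho : 1/2 < rho < 1) (Hpi : 0 < pi < 1)
  (Hc : 0 < c) (Hk : 0 < k)
  (Hkappa : k / (1 - pi) <= 1 - rho) (Hgamma : c / (1 - pi) <= 1 - rho) :
  forall m : mechanism, VP mu0 rho pi c k m <= VP mu0 rho pi c k baseline.
Proof.
  intros m.
  pose proof (scaled_cost_le k pi rho (proj2 Hpi) Hkappa) as Hk_small.
  pose proof (scaled_cost_le c pi rho (proj2 Hpi) Hgamma) as Hc_small.
  rewrite VP_baseline by assumption.
  apply VP_le; assumption.
Qed.
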